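(* Let $T\in(0,\infty)$, $c\in[2,\infty)$ and $f\in C(\mathbb{R},\mathbb{R})$. For every $d\in\mathbb{N}$ let $\beta^d\in C(\mathbb{R}^d,\mathbb{R}^d)$, $\sigma^d\in C(\mathbb{R}^d,\mathbb{R}^{d\times d})$, $\gamma^d\in C(\mathbb{R}^{2d},\mathbb{R}^d)$, $g^d\in C(\mathbb{R}^d,\mathbb{R})$, and let $\nu^d$ be a Lévy measure on $\mathcal{B}(\mathbb{R}^d\setminus\{0\})$. Assume: (A1) for every $d$ there is $C_d\in(0,\infty)$ with $\|\gamma^d(x,z)\|^2\le C_d(1\wedge\|z\|^2)$ and $\|\gamma^d(x,z)-\gamma^d(y,z)\|^2\le C_d\|x-y\|^2(1\wedge\|z\|^2)$ for all $x,y,z\in\mathbb{R}^d$; (A2) for all $d$, $x,z$ the Jacobian $(D_x\gamma^d)(x,z)$ exists and there is $\lambda_d\in(0,\infty)$ with $\lambda_d\le|\det(I_d+\delta(D_x\gamma^d)(x,z))|$ for all $x,z\in\mathbb{R}^d$, $\delta\in[0,1]$; (A3) for all $d\in\mathbb{N}$, $x,y\in\mathbb{R}^d$, $w_1,w_2\in\mathbb{R}$: $\|\beta^d(x)-\beta^d(y)\|^2+\|\sigma^d(x)-\sigma^d(y)\|_F^2+\int_{\mathbb{R}^d\setminus\{0\}}\|\gamma^d(x,z)-\gamma^d(y,z)\|^2\nu^d(dz)\le c\|x-y\|^2$, $|f(w_1)-f(w_2)|^2\le c|w_1-w_2|^2$, $|g^d(x)-g^d(y)|^2\le cd^cT^{-1}\|x-y\|^2$,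 and $\|\beta^d(0)\|^2+\|\sigma^d(0)\|_F^2+\int_{\mathbb{R}^d\setminus\{0\}}\|\gamma^d(0,z)\|^2\nu^d(dz)+T^3(|f(0)|+1)^2+T|g^d(0)|^2\le cd^c$. Let $b=64\big(1+|c^{1/2}(4c^{1/2}+2c^{1/2}T^{-3/2})|^{1/2}\big)$. Then there exist, for every $\varepsilon\in(0,1)$, $f_\varepsilon\in C(\mathbb{R},\mathbb{R})$ and $\Phi_{f_\varepsilon}\in\mathbf{N}$ such that for all $d\in\mathbb{N}$, $\varepsilon\in(0,1)$, $w_1,w_2\in\mathbb{R}$: $\mathcal{R}(\Phi_{f_\varepsilon})=f_\varepsilon$, $\dim(\mathcal{D}(\Phi_{f_\varepsilon}))=3\le\frac{bd^c\varepsilon^{-c}}{4}$, $|||\mathcal{D}(\Phi_{f_\varepsilon})|||\le\frac{b\varepsilon^{-2}}{4}$, $|f_\varepsilon(w_1)-f_\varepsilon(w_2)|^2\le c|w_1-w_2|^2$, $|f(w_1)-f_\varepsilon(w_1)|^2\le\varepsilon(1+|w_1|^4)$, and $T^3|f_\varepsilon(0)|\le cd^c$.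
   Context: $\|\cdot\|$ Euclidean norm, $\|\cdot\|_F$ Frobenius norm; for $x=(x_1,\dots,x_k)$, $|||x|||=\max_i|x_i|$ and $\dim(x)=k$. Deep neural networks: $\mathbf{A}_k\colon\mathbb{R}^k\to\mathbb{R}^k$ is the componentwise ReLU; $\mathbf{N}=\bigcup_{H\in\mathbb{N}}\bigcup_{(k_0,\dots,k_{H+1})\in\mathbb{N}^{H+2}}\prod_{n=1}^{H+1}(\mathbb{R}^{k_n\times k_{n-1}}\times\mathbb{R}^{k_n})$. For $\Phi=((W_1,B_1),\dots,(W_{H+1},B_{H+1}))$ with $W_n\in\mathbb{R}^{k_n\times k_{n-1}}$, $B_n\in\mathbb{R}^{k_n}$: $\mathcal{D}(\Phi)=(k_0,\dots,k_{H+1})$ and $\mathcal{R}(\Phi)\in C(\mathbb{R}^{k_0},\mathbb{R}^{k_{H+1}})$, $(\mathcal{R}(\Phi))(x_0)=W_{H+1}x_H+B_{H+1}$ with $x_n=\mathbf{A}_{k_n}(W_nx_{n-1}+B_n)$, $n=1,\dots,H$. *)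

From HB Require Import structures.
From mathcomp Require Import all_boot all_order all_algebra.
From mathcomp Require Import all_classical all_reals all_analysis.
Set Implicit Arguments. Unset Strict Implicit. Unset Printing Implicit Defensive.
Import Order.TTheory GRing.Theory Num.Theory.
Import numFieldNormedType.Exports.
Local Open Scope classical_set_scope.
Local Open Scope ring_scope.

Definition sqnorm (R : realType) (d : nat) (x : 'rV[R]_d) : R :=
  \sum_(i < d) (x 0 i) ^+ 2.

Definition sqfrob (R : realType) (m n : nat) (A : 'M[R]_(m, n)) : R :=
  \sum_(i < m) \sum_(j < n) (A i j) ^+ 2.

Definition RdB (R : realType) (d : nat) :=
  g_sigma_algebraType (@open 'rV[R]_d).

(* A Levy measure on B(R^d \ {0}), represented (equivalently) as a measure
   on B(R^d) giving no mass to {0}, with  int (1 /\ ||z||^2) nu(dz) < oo. *)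
Definition levy_measure (R : realType) (d : nat)
  (nu : {measure set (RdB R d) -> \bar R}) : Prop :=
  nu [set (0%R : 'rV[R]_d)] = 0%E /\
  (\int[nu]_(z in ~` [set (0%R : 'rV[R]_d)]) (Num.min 1 (sqnorm (z : 'rV[R]_d)))%:E
     < +oo)%E.

Definition partials_exist (R : realType) (d : nat) (f : 'rV[R]_d -> 'rV[R]_d)
  (x : 'rV[R]_d) : Prop :=
  forall j : 'I_d, derivable f x (delta_mx 0 j).

Definition jac (R : realType) (d : nat) (f : 'rV[R]_d -> 'rV[R]_d)
  (x : 'rV[R]_d) : 'M[R]_d :=
  \matrix_(i < d, j < d) ('D_(delta_mx 0 j) f x) 0 i.

Definition relu (R : realType) (r : R) : R := Num.max r 0.

Inductive DNN (R : realType) : nat -> nat -> Type :=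
| DNNout (k0 k1 : nat) (W : 'M[R]_(k1, k0)) (B : 'cV[R]_k1) : DNN R k0 k1
| DNNlayer (k0 k1 k2 : nat) (W : 'M[R]_(k1, k0)) (B : 'cV[R]_k1)
    (rest : DNN R k1 k2) : DNN R k0 k2.

Fixpoint dims (R : realType) (k0 k2 : nat) (Phi : DNN R k0 k2) : seq nat :=
  match Phi with
  | DNNout k0 k1 _ _ => [:: k0; k1]
  | DNNlayer k0 _ _ _ _ rest => k0 :: dims rest
  end.

Definition is_DNN (R : realType) (k0 k2 : nat) (Phi : DNN R k0 k2) : bool :=
  all (fun k => 0 < k)%N (dims Phi).

Fixpoint realize (R : realType) (k0 k2 : nat) (Phi : DNN R k0 k2)
  : 'cV[R]_k0 -> 'cV[R]_k2 :=
  match Phi in DNN _ a b return 'cV[R]_a -> 'cV[R]_b with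
  | DNNout _ _ W B => fun x => W *m x + B
  | DNNlayer _ _ _ W B rest => fun x => realize rest (map_mx (@relu R) (W *m x + B))
  end.

Definition maxdim (R : realType) (k0 k2 : nat) (Phi : DNN R k0 k2) : nat :=
  foldr maxn 0%N (dims Phi).

(* On [0, N] the approximant interpolates f linearly on the grid
   p_j = m / (m - j) - 1 (0 <= j <= N, m = N + 1); it does the same on [-N, 0]
   and is constant beyond +-N.  The cells grow like
   p_{j+1} - p_j <= 2 (1 + p_j)^2 / m, so on [-N, N] the interpolation error of
   the sqrt(c)-Lipschitz f is at most 2 sqrt(c) (1 + |x|)^2 / m, and beyond +-N
   it is at most sqrt(c) |x|.  With N = floor(6 sqrt(c) / eps) both squared
   errors are at most eps (1 + x^4).  Each interpolant is a weighted sum of the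
   N ramps relu(x - p_j) - relu(x - p_{j+1}), two ReLU neurons each, so the
   approximant is realized by a network with one hidden layer of width
   4 N <= b eps^-2 / 4.  It is sqrt(c)-Lipschitz because every slope is at most
   sqrt(c). *)

From HB Require Import structures.
From mathcomp Require Import all_boot all_order all_algebra.
From mathcomp Require Import all_classical all_reals all_analysis.
From mathcomp Require Import ring lra zify.
Import Order.TTheory GRing.Theory Num.Theory.
Import numFieldNormedType.Exports.
Local Open Scope classical_set_scope.
Local Open Scope ring_scope.

Set Implicit Arguments.
Unset Strict Implicit.
Unset Printing Implicit Defensive.

Section Lipschitz.
Variables (R : realType) (h : R -> R) (L : R).
Hypothesis h_lip : forall a b, `|h a - h b| <= L * `|a - b|.

Lemma lipschitz_ge0 : 0 <= L.
Proof. by have := h_lip 1 0; rewrite subr0 normr1 mulr1; apply: le_trans. Qed.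

Lemma lipschitz_continuous : continuous h.
Proof.
move=> x; apply/cvgrPdist_lt => e e_gt0.
have L1_gt0 : 0 < L + 1 by have := lipschitz_ge0; lra.
near=> y; apply: le_lt_trans (h_lip x y) _.
apply: (@le_lt_trans _ _ ((L + 1) * `|x - y|)).
  by rewrite ler_wpM2r //; lra.
rewrite -ltr_pdivlMl //; near: y; apply: cvgr_dist_lt => //.
by rewrite mulr_gt0 // invr_gt0.
Unshelve. all: by end_near. Qed.

Lemma lipschitz_sqr a b : `|h a - h b| ^+ 2 <= L ^+ 2 * `|a - b| ^+ 2.
Proof. by rewrite -exprMn lerXn2r ?nnegrE ?mulr_ge0 ?lipschitz_ge0. Qed.

End Lipschitz.

Lemma lipschitz_sqrt (R : realType) (h : R -> R) (c : R) :
  (forall a b, `|h a - h b| ^+ 2 <= c * `|a - b| ^+ 2) ->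
  forall a b, `|h a - h b| <= Num.sqrt c * `|a - b|.
Proof.
move=> h_lip a b; have c_ge0 : 0 <= c.
  by have := h_lip 1 0; rewrite subr0 normr1 expr1n mulr1; apply: le_trans.
by rewrite -(@ler_pXn2r _ 2) ?nnegrE ?mulr_ge0 ?sqrtr_ge0 // exprMn sqr_sqrtr.
Qed.

Section Relu.
Variable R : realType.
Implicit Types u v a b x y : R.

Variant relu_spec u : R -> Prop :=
| ReluNonneg of 0 <= u : relu_spec u u
| ReluNeg of u < 0 : relu_spec u 0.

Lemma reluP u : relu_spec u (relu u).
Proof. by rewrite /relu; case: (lerP 0 u) => u0; constructor. Qed.

Lemma relu_le u v : u <= v -> relu u <= relu v.
Proof. by case: (reluP u) => ?; case: (reluP v) => ?; lra. Qed.

Lemma reluBN u : relu u - relu (- u) = u.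
Proof. by case: (reluP u) => ?; case: (reluP (- u)) => ?; lra. Qed.

Definition ramp a b x : R := relu (x - a) - relu (x - b).

Lemma ramp_left a b x : x <= a -> a <= b -> ramp a b x = 0.
Proof.
by rewrite /ramp; case: (reluP (x - a)) => ?; case: (reluP (x - b)) => ?; lra.
Qed.

Lemma ramp_right a b x : b <= x -> a <= b -> ramp a b x = b - a.
Proof.
by rewrite /ramp; case: (reluP (x - a)) => ?; case: (reluP (x - b)) => ?; lra.
Qed.

Lemma ramp_mid a b x : a <= x <= b -> ramp a b x = x - a.
Proof.
by rewrite /ramp; case: (reluP (x - a)) => ?; case: (reluP (x - b)) => ?; lra.
Qed.

Lemma ramp_le a b x y : a <= b -> x <= y -> ramp a b x <= ramp a b y.
Proof.
rewrite /ramp; case: (reluP (x - a)) => ?; case: (reluP (x - b)) => ?;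
  case: (reluP (y - a)) => ?; case: (reluP (y - b)) => ?; lra.
Qed.

Lemma ramp0_oddB_le a x y : 0 <= a -> x <= y ->
  ramp 0 a y - ramp 0 a (- y) - (ramp 0 a x - ramp 0 a (- x)) <= y - x.
Proof.
move=> a_ge0 xy; rewrite /ramp !subr0.
have := reluBN x; have := reluBN y.
have := relu_le (_ : x - a <= y - a); have := relu_le (_ : - y - a <= - x - a).
lra.
Qed.

Lemma sum_ramp (p : nat -> R) n x :
  \sum_(0 <= j < n) ramp (p j) (p j.+1) x = ramp (p 0%N) (p n) x.
Proof.
rewrite /ramp -opprB -(telescope_sumr (fun j => relu (x - p j))) // -sumrN.
by apply: eq_bigr => j _; rewrite opprB.
Qed.

End Relu.

Section Interpolation.
Variables (R : realType) (h : R -> R) (p : nat -> R).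
Implicit Types x y : R.

Definition slope j := (h (p j.+1) - h (p j)) / (p j.+1 - p j).

Definition interp n x := \sum_(0 <= j < n) slope j * ramp (p j) (p j.+1) x.

(* [slopeM] and [norm_slope_le] also hold on degenerate cells, where [slope]
   is [0] since [x / 0 = 0]. *)
Lemma slopeM j : slope j * (p j.+1 - p j) = h (p j.+1) - h (p j).
Proof.
have [->|ne] := eqVneq (p j.+1) (p j); first by rewrite !subrr mulr0.
by rewrite divfK // subr_eq0.
Qed.

Lemma exists_cell n x : p 0 <= x <= p n.+1 ->
  exists2 k, (k <= n)%N & p k <= x <= p k.+1.
Proof.
elim: n => [|n IHn] /andP[p0x xpn]; first by exists 0%N; rewrite ?p0x.
have [x_le|pnx] := lerP x (p n.+1).
  by have [|k /leqW kn] := IHn; [rewrite p0x | exists k].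
by exists n.+1; rewrite // (ltW pnx).
Qed.

Variable L : R.
Hypothesis h_lip : forall a b, `|h a - h b| <= L * `|a - b|.

Lemma norm_slope_le j : `|slope j| <= L.
Proof.
have [eq|ne] := eqVneq (p j.+1) (p j).
  by rewrite /slope eq !subrr invr0 mulr0 normr0 (lipschitz_ge0 h_lip).
by rewrite /slope normrM normfV ler_pdivrMr ?normr_gt0 ?subr_eq0.
Qed.

Lemma cell_err k x : p k <= x <= p k.+1 ->
  `|h x - h (p k) - slope k * (x - p k)| <= L * (p k.+1 - p k).
Proof.
move=> /andP[pkx xpk]; set e := h x - h (p k) - slope k * (x - p k).
have eE : e = h x - h (p k.+1) - slope k * (x - p k.+1).
  by rewrite /e -[h (p k.+1)](subrK (h (p k))) -slopeM; ring.
have s_le := norm_slope_le k; have L_ge0 := lipschitz_ge0 h_lip.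
have le_l : `|e| <= L * `|x - p k| + `|slope k| * `|x - p k|.
  by apply: le_trans (ler_normB _ _) _; rewrite normrM lerD2r h_lip.
have le_r : `|e| <= L * `|x - p k.+1| + `|slope k| * `|x - p k.+1|.
  by rewrite eE; apply: le_trans (ler_normB _ _) _; rewrite normrM lerD2r h_lip.
rewrite [`|x - _|]ger0_norm ?subr_ge0 // in le_l.
rewrite [`|x - _|]ler0_norm ?subr_le0 // in le_r.
have : `|slope k| * (p k.+1 - p k) <= L * (p k.+1 - p k).
  by rewrite ler_wpM2r // subr_ge0 (le_trans pkx).
lra.
Qed.

Variable n : nat.
Hypothesis p_le : forall j k, (j <= k <= n)%N -> p j <= p k.

Lemma p_leS j : (j < n)%N -> p j <= p j.+1.
Proof. by move=> jn; apply: p_le; rewrite leqnSn. Qed.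

Lemma interp_prefix k x : (k <= n)%N -> p k <= x ->
  \sum_(0 <= j < k) slope j * ramp (p j) (p j.+1) x = h (p k) - h (p 0).
Proof.
move=> kn pkx; rewrite -(@telescope_sumr _ 0 k (fun j => h (p j))) //.
apply: eq_big_nat => j /andP[_ jk].
rewrite ramp_right ?slopeM ?p_leS ?(leq_trans jk) //.
by apply: le_trans pkx; apply: p_le; rewrite jk.
Qed.

Lemma interp_left x : x <= p 0 -> interp n x = 0.
Proof.
move=> xp0; rewrite /interp big1_seq // => j /andP[_].
rewrite mem_index_iota => /andP[_ jn].
rewrite ramp_left ?mulr0 ?p_leS //.
by apply: le_trans xp0 _; apply: p_le; exact: ltnW.
Qed.

Lemma interp_right x : p n <= x -> interp n x = h (p n) - h (p 0).
Proof. exact: interp_prefix. Qed.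

Lemma interp_cell k x : (k < n)%N -> p k <= x <= p k.+1 ->
  interp n x = h (p k) - h (p 0) + slope k * (x - p k).
Proof.
move=> kn /andP[pkx xpk]; rewrite /interp (@big_cat_nat _ _ _ k) ?(ltnW kn) //=.
rewrite interp_prefix ?(ltnW kn) // big_ltn // ramp_mid ?pkx //= addrA.
rewrite [X in _ + X]big1_seq ?addr0 // => j /andP[_].
rewrite mem_index_iota => /andP[kj jn].
rewrite ramp_left ?mulr0 ?p_leS //.
by apply: le_trans xpk _; apply: p_le; rewrite kj (ltnW jn).
Qed.

Lemma interp_err x : (0 < n)%N -> p 0 <= x <= p n ->
  exists2 k, (k < n)%N /\ p k <= x &
    `|h x - h (p 0) - interp n x| <= L * (p k.+1 - p k).
Proof.
move=> n_gt0 /andP[p0x xpn].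
have [k kn /andP[pkx xpk]] : exists2 k, (k <= n.-1)%N & p k <= x <= p k.+1.
  by apply: exists_cell; rewrite prednK ?p0x.
have {}kn : (k < n)%N by rewrite -(prednK n_gt0) ltnS.
exists k => //; rewrite (interp_cell kn) ?pkx //.
have -> : h x - h (p 0) - (h (p k) - h (p 0) + slope k * (x - p k))
  = h x - h (p k) - slope k * (x - p k) by ring.
by apply: cell_err; rewrite pkx.
Qed.

Lemma interp_lip x y : x <= y ->
  `|interp n y - interp n x| <= L * (ramp (p 0) (p n) y - ramp (p 0) (p n) x).
Proof.
move=> xy; rewrite -!sum_ramp -!sumrB mulr_sumr.
apply: le_trans (ler_norm_sum _ _ _) _; apply: ler_sum_nat => j /andP[_ jn].
have ramp_incr : 0 <= ramp (p j) (p j.+1) y - ramp (p j) (p j.+1) x.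
  by rewrite subr_ge0 ramp_le ?p_leS.
by rewrite -mulrBr normrM (ger0_norm ramp_incr) ler_wpM2r ?norm_slope_le.
Qed.

End Interpolation.

Section Grid.
Context {R : realType} (N : nat).
Let m : R := N.+1%:R.

Definition grid (j : nat) : R := m / (m - j%:R) - 1.

Lemma grid0 : grid 0 = 0.
Proof. by rewrite /grid subr0 divff ?subrr // pnatr_eq0. Qed.

Lemma gridN : grid N = N%:R.
Proof. by rewrite /grid /m -natr1 addrAC subrr add0r divr1 addrK. Qed.

Let m_subn_ge1 j : (j <= N)%N -> 1 <= m - j%:R.
Proof. by rewrite -(ler_nat R) /m -natr1; lra. Qed.

Lemma grid_le j k : (j <= k <= N)%N -> grid j <= grid k.
Proof.
move=> /andP[jk kN].
have mk := m_subn_ge1 kN; have mj := m_subn_ge1 (leq_trans jk kN).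
rewrite lerD2r ler_pM2l ?ltr0n // lef_pV2 ?posrE; try lra.
by rewrite lerD2l lerN2 ler_nat.
Qed.

Lemma grid_ge0 j : (j <= N)%N -> 0 <= grid j.
Proof. by move=> jN; rewrite -grid0 grid_le. Qed.

Lemma grid_step j : (j < N)%N -> grid j.+1 - grid j <= 2 * (1 + grid j) ^+ 2 / m.
Proof.
move=> jN; have a_ge2 : 2 <= m - j%:R by have := m_subn_ge1 jN; rewrite -natr1; lra.
have m_gt0 : 0 < m by rewrite ltr0n.
rewrite -subr_ge0 /grid -[j.+1%:R]natr1; set a := m - j%:R in a_ge2 *.
have -> : m - (j%:R + 1) = a - 1 by rewrite /a; ring.
have -> : 2 * (1 + (m / a - 1)) ^+ 2 / m - (m / (a - 1) - 1 - (m / a - 1))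
    = m * (a - 2) / (a ^+ 2 * (a - 1)).
  by field; apply/and3P; split; apply/eqP; have := ler0n R N; lra.
by rewrite divr_ge0 ?mulr_ge0 ?exprn_ge0; lra.
Qed.

End Grid.

Lemma expr4_1D_le (R : realType) (x : R) : (1 + x) ^+ 4 <= 8 * (1 + x ^+ 4).
Proof.
have : 0 <= (x - 1) ^+ 2 * (7 * x ^+ 2 + 10 * x + 7).
  by rewrite mulr_ge0 ?sqr_ge0 //; have := sqr_ge0 (7 * x + 5); lra.
lra.
Qed.

Section GridInterpolation.
Variables (R : realType) (h : R -> R) (L : R) (N : nat).
Hypothesis h_lip : forall a b, `|h a - h b| <= L * `|a - b|.
Hypothesis N_gt0 : (0 < N)%N.
Implicit Types x : R.
Let m : R := N.+1%:R.
Local Notation e x := `|h x - h 0 - interp h (grid N) N x|.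

Lemma interp_grid_err x : 0 <= x <= N%:R -> e x <= 2 * L * (1 + x) ^+ 2 / m.
Proof.
move=> x_bnd; have [x_ge0 _] := andP x_bnd.
have [|k [kN pkx] err] := interp_err h_lip (@grid_le R N) N_gt0 (x := x).
  by rewrite grid0 gridN.
rewrite grid0 in err; apply: le_trans err _.
rewrite [2 * L]mulrC -2!mulrA ler_wpM2l ?(lipschitz_ge0 h_lip) // mulrA.
apply: le_trans (grid_step kN) _; rewrite ler_wpM2r ?invr_ge0 // ler_wpM2l //.
have pk_ge0 : 0 <= grid N k :> R := grid_ge0 (ltnW kN).
by rewrite lerXn2r ?nnegrE ?lerD2l //; lra.
Qed.

Variable eps : R.

Lemma interp_grid_sqerr_in x : 32 * L ^+ 2 <= eps * m ^+ 2 -> 0 <= x <= N%:R ->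
  e x ^+ 2 <= eps * (1 + x ^+ 4).
Proof.
move=> N_large /[dup] /andP[x_ge0 _] /interp_grid_err err.
have m_gt0 : 0 < m by rewrite ltr0n.
have L_ge0 := lipschitz_ge0 h_lip.
set B := 2 * L * (1 + x) ^+ 2 in err.
have em2 : (e x * m) ^+ 2 <= B ^+ 2.
  have em : e x * m <= B by rewrite -ler_pdivlMr.
  by have := mulr_ge0 (normr_ge0 _ : 0 <= e x) (ltW m_gt0); nra.
have B2 : B ^+ 2 <= 32 * L ^+ 2 * (1 + x ^+ 4).
  by have := ler_wpM2l (sqr_ge0 L) (expr4_1D_le x); rewrite /B; lra.
have x4_ge0 : 0 <= 1 + x ^+ 4 by rewrite addr_ge0 ?exprn_ge0.
have bound := ler_wpM2r x4_ge0 N_large; rewrite exprMn in em2.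
by rewrite -(ler_pM2r (exprn_gt0 2 m_gt0)); lra.
Qed.

Lemma interp_grid_sqerr_out x : 0 <= eps -> 32 * L ^+ 2 <= eps * m ^+ 2 ->
  N%:R <= x -> e x ^+ 2 <= eps * (1 + x ^+ 4).
Proof.
move=> eps_ge0 N_large Nx; have N_ge1 : 1 <= N%:R :> R by rewrite ler1n.
have L_ge0 := lipschitz_ge0 h_lip.
have ex : e x <= L * x.
  rewrite interp_right ?grid0 ?gridN //; last exact: grid_le.
  rewrite opprB addrA subrK; apply: le_trans (h_lip _ _) _.
  by rewrite ler_wpM2l // ger0_norm; lra.
have ex2 : e x ^+ 2 <= L ^+ 2 * x ^+ 2.
  by have := (normr_ge0 _ : 0 <= e x); nra.
have m2 : m ^+ 2 <= 4 * x ^+ 2 by rewrite /m -natr1; nra.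
have x2_ge0 := sqr_ge0 x.
have := ler_wpM2r x2_ge0 N_large; have := ler_wpM2l eps_ge0 m2.
have : 0 <= eps * x ^+ 4 by rewrite mulr_ge0 ?exprn_ge0 //; lra.
nra.
Qed.

Lemma interp_grid_sqerr x : 0 <= eps -> 32 * L ^+ 2 <= eps * m ^+ 2 -> 0 <= x ->
  e x ^+ 2 <= eps * (1 + x ^+ 4).
Proof.
move=> eps_ge0 N_large x_ge0; have [xN|/ltW Nx] := lerP x N%:R.
  by apply: interp_grid_sqerr_in; rewrite ?x_ge0.
exact: interp_grid_sqerr_out.
Qed.

End GridInterpolation.

Section PiecewiseLinearApproximation.
Variables (R : realType) (f : R -> R).
Implicit Types x y : R.

Definition pl_approx N x :=
  f 0 + interp f (grid N) N x + interp (f \o -%R) (grid N) N (- x).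

Lemma pl_approx0 N : pl_approx N 0 = f 0.
Proof.
by rewrite /pl_approx oppr0 !interp_left ?addr0 ?grid0 //; apply: grid_le.
Qed.

Variable L : R.
Hypothesis f_lip : forall a b, `|f a - f b| <= L * `|a - b|.

Let fN_lip a b : `|(f \o -%R) a - (f \o -%R) b| <= L * `|a - b|.
Proof. by apply: le_trans (f_lip _ _) _; rewrite -opprD normrN. Qed.

Lemma pl_approx_lip N x y : `|pl_approx N x - pl_approx N y| <= L * `|x - y|.
Proof.
wlog xy : x y / x <= y.
  move=> wlog_xy; case/orP: (le_total x y) => [/wlog_xy //|/wlog_xy].
  by rewrite distrC [`|y - x|]distrC.
have -> : pl_approx N x - pl_approx N y
    = - (interp f (grid N) N y - interp f (grid N) N x)
      + (interp (f \o -%R) (grid N) N (- x) - interp (f \o -%R) (grid N) N (- y)).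
  by rewrite /pl_approx; ring.
apply: le_trans (ler_normD _ _) _; rewrite normrN.
have lip_f := interp_lip f_lip (@grid_le R N) xy.
have nyx : - y <= - x by rewrite lerN2.
have lip_fN := interp_lip fN_lip (@grid_le R N) nyx.
rewrite grid0 gridN in lip_f lip_fN.
have L_ge0 := lipschitz_ge0 f_lip.
have := ler_wpM2l L_ge0 (ramp0_oddB_le (ler0n R N) xy).
have -> : `|x - y| = y - x by rewrite distrC ger0_norm ?subr_ge0.
lra.
Qed.

Variables (N : nat) (eps : R).
Hypotheses (N_gt0 : (0 < N)%N) (eps_ge0 : 0 <= eps).
Hypothesis N_large : 32 * L ^+ 2 <= eps * N.+1%:R ^+ 2.

Lemma pl_approx_sqerr w : `|f w - pl_approx N w| ^+ 2 <= eps * (1 + `|w| ^+ 4).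
Proof.
have interp_le0 h x : x <= 0 -> interp h (grid N) N x = 0.
  by move=> x_le0; apply: interp_left; [exact: grid_le | rewrite grid0].
have [w_ge0|w_lt0] := lerP 0 w.
  rewrite (ger0_norm w_ge0) /pl_approx (interp_le0 _ (- w)) ?oppr_le0 //.
  by rewrite addr0 opprD addrA (interp_grid_sqerr f_lip).
rewrite (ltr0_norm w_lt0) /pl_approx (interp_le0 f w) ?(ltW w_lt0) // addr0.
have -> : f w = (f \o -%R) (- w) by rewrite /= opprK.
have -> : f 0 = (f \o -%R) 0 by rewrite /= oppr0.
by rewrite opprD addrA (interp_grid_sqerr fN_lip) // oppr_ge0 (ltW w_lt0).
Qed.

End PiecewiseLinearApproximation.

Section ShallowNetwork.
Variable R : realType.

Definition neuron (e : R * R * R) (x : R) : R := e.2 * relu (e.1.1 * x + e.1.2).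

Definition shallow_net (a : R) (s : seq (R * R * R)) : DNN R 1 1 :=
  DNNlayer (\matrix_(i < size s, j < 1) (nth (0, 0, 0) s i).1.1)
    (\col_(i < size s) (nth (0, 0, 0) s i).1.2)
    (DNNout (\row_(i < size s) (nth (0, 0, 0) s i).2) (const_mx a)).

Lemma realize_shallow_net a s x :
  realize (shallow_net a s) (const_mx x) = const_mx (a + \sum_(e <- s) neuron e x).
Proof.
apply/matrixP => i j; rewrite /= !mxE (big_nth (0, 0, 0)) big_mkord addrC.
by congr (_ + _); apply: eq_bigr => k _; rewrite !mxE big_ord1 !mxE.
Qed.

Definition interp_neurons (w : R) (h : R -> R) (p : nat -> R) (n : nat) :=
  [seq (w, - p j, slope h p j) | j <- iota 0 n] ++
  [seq (w, - p j.+1, - slope h p j) | j <- iota 0 n].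

Lemma size_interp_neurons w h p n : size (interp_neurons w h p n) = (2 * n)%N.
Proof. by rewrite size_cat !size_map size_iota addnn mul2n. Qed.

Lemma sum_interp_neurons w h p n x :
  \sum_(e <- interp_neurons w h p n) neuron e x = interp h p n (w * x).
Proof.
rewrite big_cat /= !big_map /interp /index_iota subn0 -big_split.
by apply: eq_bigr => j _; rewrite /neuron /ramp /=; ring.
Qed.

Definition pl_net (f : R -> R) (N : nat) : DNN R 1 1 :=
  shallow_net (f 0)
    (interp_neurons 1 f (grid N) N ++ interp_neurons (-1) (f \o -%R) (grid N) N).

Lemma realize_pl_net f N x :
  realize (pl_net f N) (const_mx x) = const_mx (pl_approx f N x).
Proof.
by rewrite realize_shallow_net big_cat !sum_interp_neurons mul1r mulN1r addrA.
Qed.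

Lemma dims_pl_net f N : dims (pl_net f N) = [:: 1; 4 * N; 1]%N.
Proof. by rewrite /= size_cat !size_interp_neurons -mulnDl. Qed.

Lemma maxdim_pl_net f N : (0 < N)%N -> maxdim (pl_net f N) = (4 * N)%N.
Proof. by move=> N_gt0; rewrite /maxdim dims_pl_net /=; lia. Qed.

Lemma is_DNN_pl_net f N : (0 < N)%N -> is_DNN (pl_net f N).
Proof. by move=> N_gt0; rewrite /is_DNN dims_pl_net /=; lia. Qed.

End ShallowNetwork.

Section Bounds.
Variable R : realType.

Lemma cell_count_spec (L eps : R) : 1 <= L -> 0 < eps <= 1 ->
  let N := Num.truncn (6 * L / eps) in
  [/\ (0 < N)%N, N%:R <= 6 * L / eps & 32 * L ^+ 2 <= eps * N.+1%:R ^+ 2].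
Proof.
move=> L_ge1 /andP[eps_gt0 eps_le1] N.
have six_le : 6 * L <= 6 * L / eps.
  by rewrite ler_pMr ?invf_ge1 //; lra.
have /andP[N_le N_gt] : N%:R <= 6 * L / eps < N.+1%:R by apply: truncn_itv; lra.
split => //; first by rewrite truncn_gt0; lra.
have : 6 * L < N.+1%:R * eps by rewrite -ltr_pdivrMr.
have : N.+1%:R * eps <= N.+1%:R by rewrite ler_piMr.
nra.
Qed.

Lemma width_le (L b eps : R) (N : nat) : 0 <= L -> 0 < eps <= 1 ->
  N%:R <= 6 * L / eps -> 64 + 128 * L <= b -> (4 * N)%:R <= b * eps ^- 2 / 4.
Proof.
move=> L_ge0 /andP[eps_gt0 eps_le1] N_le b_ge.
have ie_ge1 : 1 <= eps^-1 by rewrite invf_ge1.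
rewrite natrM -exprVn; move: N_le; rewrite -mulrA.
set ie := eps^-1 in ie_ge1 * => N_le.
have : L * ie <= L * ie ^+ 2 by rewrite ler_wpM2l //; nra.
have := ler_wpM2r (sqr_ge0 ie) b_ge.
nra.
Qed.

Lemma net_constant_ge (L t : R) : 0 <= L -> 0 <= t ->
  64 + 128 * L <= 64 * (1 + Num.sqrt `|L * (4 * L + 2 * L * t)|).
Proof.
move=> L_ge0 t_ge0.
suff : 2 * L <= Num.sqrt `|L * (4 * L + 2 * L * t)| by lra.
rewrite -{1}[2 * L]ger0_norm ?mulr_ge0 // -sqrtr_sqr ler_sqrt //.
apply: le_trans (ler_norm _); have := mulr_ge0 (mulr_ge0 L_ge0 L_ge0) t_ge0; nra.
Qed.

Lemma three_le_budget (b c d eps : R) :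
  12 <= b -> 0 <= c -> 1 <= d -> 0 < eps <= 1 -> 3 <= b * d `^ c * eps `^ (- c) / 4.
Proof.
move=> b_ge c_ge0 d_ge1 eps01.
have := ler_powR d_ge1 c_ge0; have := ger_powR eps01 (_ : - c <= 0); rewrite !powRr0.
rewrite oppr_le0 => /(_ c_ge0) eps_pow d_pow.
have : 12 <= b * d `^ c by nra.
nra.
Qed.

Lemma cube_norm_le (T a y w : R) : 0 <= T -> 0 <= y ->
  T ^+ 3 * (`|a| + 1) ^+ 2 + y <= w -> T ^+ 3 * `|a| <= w.
Proof.
move=> T_ge0 y_ge0; have T3_ge0 := exprn_ge0 3 T_ge0.
have : `|a| <= (`|a| + 1) ^+ 2 by have := normr_ge0 a; nra.
move=> /(ler_wpM2l T3_ge0); lra.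
Qed.

Lemma lee_fin_addl_ge0 (a : \bar R) (x y : R) :
  (0 <= a)%E -> (a + x%:E <= y%:E)%E -> x <= y.
Proof. by move=> a_ge0 /(le_trans (lee_paddl a_ge0 (lexx _))); rewrite lee_fin. Qed.

Lemma sqnorm_ge0 d (x : 'rV[R]_d) : 0 <= sqnorm x.
Proof. by apply: sumr_ge0 => i _; apply: sqr_ge0. Qed.

Lemma sqfrob_ge0 m n (A : 'M[R]_(m, n)) : 0 <= sqfrob A.
Proof. by apply: sumr_ge0 => i _; apply: sumr_ge0 => j _; apply: sqr_ge0. Qed.

End Bounds.

Theorem lemma2p1 (R : realType) (T c : R) (f : R -> R)
  (beta : forall d : nat, 'rV[R]_d -> 'rV[R]_d)
  (sigma : forall d : nat, 'rV[R]_d -> 'M[R]_d)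
  (gamma : forall d : nat, 'rV[R]_d -> 'rV[R]_d -> 'rV[R]_d)
  (g : forall d : nat, 'rV[R]_d -> R)
  (nu : forall d : nat, {measure set (RdB R d) -> \bar R}) :
  0 < T -> 2 <= c -> continuous f ->
  (forall d, (0 < d)%N -> continuous (beta d)) ->
  (forall d, (0 < d)%N -> continuous (sigma d)) ->
  (forall d, (0 < d)%N ->
     continuous (fun p : 'rV[R]_d * 'rV[R]_d => gamma d p.1 p.2)) ->
  (forall d, (0 < d)%N -> continuous (g d)) ->
  (forall d, (0 < d)%N -> levy_measure (nu d)) ->
  (* (A1) *)
  (forall d, (0 < d)%N -> exists2 C : R, 0 < C &
     forall x y z : 'rV[R]_d,
       sqnorm (gamma d x z) <= C * Num.min 1 (sqnorm z) /\
       sqnorm (gamma d x z - gamma d y z)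
         <= C * sqnorm (x - y) * Num.min 1 (sqnorm z)) ->
  (* (A2) *)
  (forall d, (0 < d)%N ->
     (forall x z : 'rV[R]_d, partials_exist (fun x' => gamma d x' z) x) /\
     exists2 lam : R, 0 < lam &
       forall (x z : 'rV[R]_d) (delta : R), 0 <= delta <= 1 ->
         lam <= `|\det (1%:M + delta *: jac (fun x' => gamma d x' z) x)|) ->
  (* (A3) *)
  (forall d, (0 < d)%N -> forall x y : 'rV[R]_d,
     ((sqnorm (beta d x - beta d y) + sqfrob (sigma d x - sigma d y))%:E
      + \int[nu d]_(z in ~` [set (0%R : 'rV[R]_d)])
          (sqnorm (gamma d x z - gamma d y z))%:E
      <= (c * sqnorm (x - y))%:E)%E) ->
  (forall w1 w2 : R, `|f w1 - f w2| ^+ 2 <= c * `|w1 - w2| ^+ 2) ->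
  (forall d, (0 < d)%N -> forall x y : 'rV[R]_d,
     `|g d x - g d y| ^+ 2 <= c * powR d%:R c * T^-1 * sqnorm (x - y)) ->
  (forall d, (0 < d)%N ->
     ((sqnorm (beta d 0) + sqfrob (sigma d 0))%:E
      + \int[nu d]_(z in ~` [set (0%R : 'rV[R]_d)]) (sqnorm (gamma d 0 z))%:E
      + (T ^+ 3 * (`|f 0| + 1) ^+ 2 + T * `|g d 0| ^+ 2)%:E
      <= (c * powR d%:R c)%:E)%E) ->
  let b := 64 * (1 + Num.sqrt `|Num.sqrt c * (4 * Num.sqrt c
                     + 2 * Num.sqrt c * powR T (- (3 / 2)))|) in
  exists (fe : R -> R -> R) (Phi : R -> DNN R 1 1),
    forall d : nat, (0 < d)%N -> forall eps : R, 0 < eps < 1 ->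
    forall w1 w2 : R,
      [/\ is_DNN (Phi eps) /\ continuous (fe eps) /\
          (forall x : R, realize (Phi eps) (const_mx x) = const_mx (fe eps x)),
          size (dims (Phi eps)) = 3%N /\
            3 <= b * powR d%:R c * powR eps (- c) / 4,
          (maxdim (Phi eps))%:R <= b * eps ^- 2 / 4 /\
            `|fe eps w1 - fe eps w2| ^+ 2 <= c * `|w1 - w2| ^+ 2,
          `|f w1 - fe eps w1| ^+ 2 <= eps * (1 + `|w1| ^+ 4) &
          T ^+ 3 * `|fe eps 0| <= c * powR d%:R c].
Proof.
move=> T_gt0 c_ge2 _ _ _ _ _ _ _ _ _ f_sqlip _ bounds0 b.
have c_ge0 : 0 <= c by lra.
pose L := Num.sqrt c.
have f_lip : forall a b, `|f a - f b| <= L * `|a - b| := lipschitz_sqrt f_sqlip.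
have L_ge1 : 1 <= L by rewrite -sqrtr1 ler_sqrt; lra.
have b_ge : 64 + 128 * L <= b := net_constant_ge (sqrtr_ge0 c) (powR_ge0 _ _).
pose N eps := Num.truncn (6 * L / eps).
exists (fun eps => pl_approx f (N eps)), (fun eps => pl_net f (N eps)).
move=> d d_gt0 eps /andP[eps_gt0 eps_lt1] w1 w2.
have eps01 : 0 < eps <= 1 by rewrite eps_gt0 ltW.
have [N_gt0 N_le N_large] := cell_count_spec L_ge1 eps01.
split.
- split; first exact: is_DNN_pl_net.
  split; first exact: lipschitz_continuous (pl_approx_lip f_lip _).
  exact: realize_pl_net.
- split; first by rewrite dims_pl_net.
  by apply: three_le_budget; rewrite ?ler1n //; lra.
- split; first by rewrite maxdim_pl_net //; apply: width_le N_le b_ge; lra.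
  by rewrite -(sqr_sqrtr c_ge0); apply: lipschitz_sqr; apply: pl_approx_lip.
- exact: (pl_approx_sqerr (N := N eps) f_lip N_gt0 (ltW eps_gt0) N_large w1).
- have gT_ge0 : 0 <= T * `|g d 0| ^+ 2 by rewrite mulr_ge0 ?sqr_ge0 ?(ltW T_gt0).
  rewrite pl_approx0; apply: (cube_norm_le (ltW T_gt0) gT_ge0).
  apply: lee_fin_addl_ge0 (bounds0 d d_gt0).
  rewrite adde_ge0 ?integral_ge0 // => [|z _];
    by rewrite lee_fin ?addr_ge0 ?sqnorm_ge0 ?sqfrob_ge0.
Qed.
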